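(* Let $r_0,g_0,g_\infty\in\mathbb C$ and let $G(t,z)$ be the EGF of the GKP triangle $\left[\begin{array}{cc|c}-r_0,&1&g_0\\ 0,&-1&g_\infty\end{array}\right]$ (i.e. the case $r_\infty=1$, $r_1=-r_0$, $g_1=-g_0-g_\infty$ of the new parametrization). If $r_0\neq0$ then near $(0,0)$ $$G(t,z)=\bigl[(1+r_0z)^{1/r_0}\bigr]^{g_0}\bigl[(1-t)+t(1+r_0z)^{1/r_0}\bigr]^{g_\infty}=\bigl[t+(1-t)(1+r_0z)^{-1/r_0}\bigr]^{-g_0}\bigl[(1-t)+t(1+r_0z)^{1/r_0}\bigr]^{-g_1},$$ and if $r_0=0$ then $G(t,z)=e^{g_0z}\,[(1-t)+te^z]^{g_\infty}$. (Principal branches, equal to $1$ at $z=0$.)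
   Context: GKP triangle: for complex parameters $\alpha,\beta,\gamma,\alpha',\beta',\gamma'$, the array $T_{n,k}=\left[\begin{array}{cc|c}\alpha,&\beta&\gamma\\ \alpha',&\beta'&\gamma'\end{array}\right]_{n,k}$ is defined by $T_{0,0}=1$, $T_{n,k}=0$ if $n<0$, $k<0$ or $k>n$, and $T_{n+1,k+1}=[\alpha n+\beta(k+1)+\gamma]T_{n,k+1}+[\alpha' n+\beta' k+\gamma']T_{n,k}$ for $n\ge0$, $k\in\mathbb Z$; its EGF is $G(t,z)=\sum_{n\ge0}\sum_{k=0}^nT_{n,k}t^kz^n/n!$. *)

(* formal power series in z with coefficients in {poly F}
   (polynomials in t), F a field; specialized to F = R[i] (complex numbers). *)
From HB Require Import structures.
From mathcomp Require Import all_boot all_order all_algebra.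
From mathcomp Require Export complex.
From mathcomp Require Export reals.
Set Implicit Arguments. Unset Strict Implicit. Unset Printing Implicit Defensive.
Import Order.TTheory GRing.Theory Num.Theory.
Local Open Scope ring_scope.

Section GKP.
Variable F : fieldType.

(* GKP triangle [a, b | c ; a', b' | c']_{n,k} for 0 <= k (T_{n,k} = 0 for
   k < 0 is built in: T_{n+1,0} = (a n + c) T_{n,0}).  T_{n,k}=0 for k>n
   follows from the recurrence. *)
Fixpoint gkp (a b c a' b' c' : F) (n k : nat) {struct n} : F :=
  match n with
  | 0%N => if k == 0%N then 1 else 0
  | m.+1 =>
    match k with
    | 0%N => (a * m%:R + c) * gkp a b c a' b' c' m 0
    | j.+1 => (a * m%:R + b * (j.+1)%:R + c) * gkp a b c a' b' c' m j.+1
              + (a' * m%:R + b' * j%:R + c') * gkp a b c a' b' c' m j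
    end
  end.

Definition gkp_row a b c a' b' c' (n : nat) : {poly F} :=
  \sum_(k < n.+1) gkp a b c a' b' c' n k *: 'X^k.

Definition fps := nat -> {poly F}.

Definition gkp_egf a b c a' b' c' : fps :=
  fun n => (n`!%:R)^-1 *: gkp_row a b c a' b' c' n.

Definition fps_one : fps := fun n => (n == 0%N)%:R.
Definition fps_mul (f g : fps) : fps :=
  fun n => \sum_(i < n.+1) f i * g (n - i)%N.
Definition fps_pow (f : fps) (k : nat) : fps := iter k (fps_mul f) fps_one.
Definition fps_sub1 (f : fps) : fps := fun n => f n - (n == 0%N)%:R.
Definition fps_pmul (p : {poly F}) (f : fps) : fps := fun n => p * f n.

Definition gbinom (a : F) (k : nat) : F :=
  (\prod_(i < k) (a - i%:R)) / k`!%:R.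

(* (1 + f)^a := sum_k binom(a,k) f^k, for f with zero constant term: the
   formal counterpart of the principal branch, equal to 1 at z = 0. *)
Definition fps_binom (a : F) (f : fps) : fps :=
  fun n => \sum_(k < n.+1) (gbinom a k)%:P * fps_pow f k n.

Definition fps_exp (c : F) : fps := fun n => (c ^+ n / n`!%:R)%:P.

Definition fps_lin1 (r : F) : fps :=
  fun n => if n == 0%N then 1 else if n == 1%N then r%:P else 0.

Definition fps_u (r0 : F) : fps := fps_binom r0^-1 (fps_sub1 (fps_lin1 r0)).
Definition fps_uinv (r0 : F) : fps := fps_binom (- r0^-1) (fps_sub1 (fps_lin1 r0)).

End GKP.

(* The row recurrence of the triangle says that G is the unique series with
   G(t,0) = 1 solving  Θ G = (g0 + g∞ t) G,  Θ = (1 + r0 z) ∂_z - t(1-t) ∂_t.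
   Θ is a derivation, so Θ(A C) = (α + γ) A C whenever Θ A = α A and
   Θ C = γ C.  For a factor (1 + f)^a the chain rule
   (1 + f) Θ((1 + f)^a) = a (1 + f)^a Θ f  reduces this to  Θ f = p (1 + f),
   and then α = a p.  Now f = r0 z has p = r0, hence Θ u = u and
   Θ u^-1 = -u^-1 for u = (1 + r0 z)^(1/r0) (for r0 = 0, u = e^z and
   Θ e^(g0 z) = g0 e^(g0 z)); next f = u - 1, f = t (u - 1) and
   f = (1 - t)(u^-1 - 1) have p = 1, t and t - 1, and in each closed form
   the α's add up to g0 + g∞ t. *)

From HB Require Import structures.
From mathcomp Require Import all_boot all_order all_algebra.
From mathcomp Require Import complex reals boolp.
From mathcomp Require Import ring zify.
Set Implicit Arguments. Unset Strict Implicit. Unset Printing Implicit Defensive.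
Import Order.TTheory GRing.Theory Num.Theory.
Local Open Scope ring_scope.

Section PowerSeries.
Variable F : numFieldType.
Local Notation fps := (fps F).
Implicit Types (f g h w : fps) (p q : {poly F}).

HB.instance Definition _ := gen_eqMixin fps.
HB.instance Definition _ := gen_choiceMixin fps.

Lemma fps_ext f g : (forall n, f n = g n) -> f = g.
Proof. exact: funext. Qed.

Definition fps_add f g : fps := fun n => f n + g n.
Definition fps_opp f : fps := fun n => - f n.
Definition fps_zero : fps := fun=> 0.

Lemma fps_addA : associative fps_add.
Proof. by move=> f g h; apply: fps_ext => n; rewrite /fps_add addrA. Qed.
Lemma fps_addC : commutative fps_add.
Proof. by move=> f g; apply: fps_ext => n; rewrite /fps_add addrC. Qed.
Lemma fps_add0 : left_id fps_zero fps_add.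
Proof. by move=> f; apply: fps_ext => n; rewrite /fps_add add0r. Qed.
Lemma fps_addN : left_inverse fps_zero fps_opp fps_add.
Proof. by move=> f; apply: fps_ext => n; rewrite /fps_add addNr. Qed.

HB.instance Definition _ :=
  GRing.isZmodule.Build fps fps_addA fps_addC fps_add0 fps_addN.

(* The ring laws of [fps_mul] are transported from {poly {poly F}} along
   truncation. *)
Definition fps_trunc N f : {poly {poly F}} := \poly_(i < N) f i.

Lemma coefM_congr (a a' b b' : {poly {poly F}}) n :
    (forall i, (i <= n)%N -> a`_i = a'`_i) ->
    (forall i, (i <= n)%N -> b`_i = b'`_i) ->
  (a * b)`_n = (a' * b')`_n.
Proof.
move=> Ha Hb; rewrite !coefM; apply: eq_bigr => i _.
by rewrite Ha ?Hb ?leq_subr // -ltnS.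
Qed.

Lemma fps_mul_trunc f g N n :
  (n < N)%N -> fps_mul f g n = (fps_trunc N f * fps_trunc N g)`_n.
Proof.
move=> nN; rewrite coefM /fps_mul; apply: eq_bigr => i _.
have iN : (i < N)%N by apply: leq_ltn_trans nN; rewrite -ltnS.
have jN : (n - i < N)%N by apply: leq_ltn_trans nN; rewrite leq_subr.
by rewrite !coef_poly iN jN.
Qed.

Lemma coef_trunc_mul f g N i : (i < N)%N ->
  (fps_trunc N (fps_mul f g))`_i = (fps_trunc N f * fps_trunc N g)`_i.
Proof. by move=> iN; rewrite coef_poly iN (fps_mul_trunc _ _ iN). Qed.

Lemma fps_mulA : associative (@fps_mul F).
Proof.
move=> f g h; apply: fps_ext => n.
rewrite (fps_mul_trunc _ _ (ltnSn n)) [RHS](fps_mul_trunc _ _ (ltnSn n)).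
rewrite (@coefM_congr _ (fps_trunc n.+1 f) _ (fps_trunc n.+1 g * fps_trunc n.+1 h)) //;
  last by move=> i ni; rewrite coef_trunc_mul.
rewrite [RHS](@coefM_congr _ (fps_trunc n.+1 f * fps_trunc n.+1 g) _ (fps_trunc n.+1 h)) ?mulrA //.
by move=> i ni; rewrite coef_trunc_mul.
Qed.

Lemma fps_mulC : commutative (@fps_mul F).
Proof.
move=> f g; apply: fps_ext => n.
by rewrite (fps_mul_trunc _ _ (ltnSn n)) [RHS](fps_mul_trunc _ _ (ltnSn n)) mulrC.
Qed.

Lemma fps_mul1 : left_id (@fps_one F) (@fps_mul F).
Proof.
move=> f; apply: fps_ext => n; rewrite (fps_mul_trunc _ _ (ltnSn n)).
rewrite (@coefM_congr _ 1 _ (fps_trunc n.+1 f)) ?mul1r ?coef_poly ?ltnSn //.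
by move=> i ni; rewrite coef_poly ltnS ni coef1.
Qed.

Lemma fps_trunc_add N f g : fps_trunc N (f + g) = fps_trunc N f + fps_trunc N g.
Proof. by apply/polyP => i; rewrite coefD !coef_poly; case: ifP; rewrite ?addr0. Qed.

Lemma fps_mulDl : left_distributive (@fps_mul F) fps_add.
Proof.
move=> f g h; apply: fps_ext => n; rewrite /fps_add !(fps_mul_trunc _ _ (ltnSn n)).
by rewrite (fps_trunc_add n.+1 f g) mulrDl coefD.
Qed.

Lemma fps_one_neq0 : fps_one F != 0.
Proof. by apply/eqP => /(congr1 (fun f : fps => f 0%N))/eqP; rewrite oner_eq0. Qed.

HB.instance Definition _ := GRing.Zmodule_isComNzRing.Build fps
  fps_mulA fps_mulC fps_mul1 fps_mulDl fps_one_neq0.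

Lemma fpsD f g n : (f + g) n = f n + g n. Proof. by []. Qed.
Lemma fpsB f g n : (f - g) n = f n - g n. Proof. by []. Qed.
Lemma fps1 n : (1 : fps) n = (n == 0%N)%:R. Proof. by []. Qed.
Lemma fpsM f g n : (f * g) n = \sum_(i < n.+1) f i * g (n - i)%N. Proof. by []. Qed.
Lemma fpsM0 f g : (f * g) 0%N = f 0%N * g 0%N. Proof. by rewrite fpsM big_ord1. Qed.
Lemma fpsM_trunc f g N n :
  (n < N)%N -> (f * g) n = (fps_trunc N f * fps_trunc N g)`_n.
Proof. exact: fps_mul_trunc. Qed.

Lemma fps_sum I (r : seq I) (P : pred I) (E : I -> fps) n :
  (\sum_(i <- r | P i) E i) n = \sum_(i <- r | P i) E i n.
Proof.
elim: r => [|x r IH]; first by rewrite !big_nil.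
by rewrite !big_cons; case: (P x); rewrite ?fpsD IH.
Qed.

Definition fpsC p : fps := fun n => if n == 0%N then p else 0.
Definition fps_z : fps := fun n => (n == 1%N)%:R.

Lemma coef_fpsCM p f n : (fpsC p * f) n = p * f n.
Proof.
by rewrite fpsM big_ord_recl subn0 big1 ?addr0 // => i _; rewrite /fpsC mul0r.
Qed.

Lemma fpsC_is_zmod_morphism : zmod_morphism fpsC.
Proof. by move=> p q; apply: fps_ext => n; rewrite fpsB /fpsC; case: ifP; rewrite ?subr0. Qed.

Lemma fpsC_is_monoid_morphism : monoid_morphism fpsC.
Proof.
split; first by apply: fps_ext => n; rewrite /fpsC fps1; case: ifP.
by move=> p q; apply: fps_ext => n; rewrite coef_fpsCM /fpsC; case: ifP; rewrite ?mulr0.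
Qed.

HB.instance Definition _ := GRing.isZmodMorphism.Build _ _ fpsC fpsC_is_zmod_morphism.
HB.instance Definition _ := GRing.isMonoidMorphism.Build _ _ fpsC fpsC_is_monoid_morphism.

Lemma coef_fps_zM f n : (fps_z * f) n = if n is m.+1 then f m else 0.
Proof.
case: n => [|m]; first by rewrite fpsM0 mul0r.
rewrite fpsM big_ord_recl big_ord_recl big1 ?addr0 => [|i _].
  by rewrite /fps_z /= mul0r mul1r add0r subSS subn0.
by rewrite /fps_z /= mul0r.
Qed.

Lemma fps_sub1E f : fps_sub1 f = f - 1. Proof. exact: fps_ext. Qed.
Lemma fps_pmulE p f : fps_pmul p f = fpsC p * f.
Proof. by apply: fps_ext => n; rewrite coef_fpsCM. Qed.
Lemma fps_lin1E (r : F) : fps_lin1 r = 1 + fpsC r%:P * fps_z.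
Proof.
apply: fps_ext => n; rewrite fpsD coef_fpsCM /fps_lin1 /fps_z fps1.
by case: n => [|[|n]] /=; rewrite ?mulr0 ?addr0 ?mulr1 ?add0r.
Qed.

Definition eq_upto n f g := forall i, (i <= n)%N -> f i = g i.

Lemma eq_upto_mul n f f' g g' :
  eq_upto n f f' -> eq_upto n g g' -> eq_upto n (f * g) (f' * g').
Proof.
move=> Hf Hg i ni; rewrite !fpsM; apply: eq_bigr => -[j /=]; rewrite ltnS => ji.
by rewrite Hf ?Hg //; lia.
Qed.

Lemma fps_lreg w : w 0%N = 1 -> GRing.lreg w.
Proof.
move=> w0 f g /eqP; rewrite -subr_eq0 -mulrBr => /eqP wh.
apply/eqP; rewrite -subr_eq0; apply/eqP; move: (f - g) wh => h wh.
suff hn n : eq_upto n h 0 by apply: fps_ext => n; apply: (hn n).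
elim: n => [|n IH] i.
  rewrite leqn0 => /eqP ->.
  by move/(congr1 (fun k : fps => k 0%N)): wh; rewrite fpsM0 w0 mul1r.
rewrite leq_eqVlt => /orP [/eqP ->|]; last exact: IH.
move/(congr1 (fun k : fps => k n.+1)): wh; rewrite fpsM big_ord_recl subn0 w0 mul1r.
by rewrite big1 ?addr0 // => j _; rewrite lift0 subSS IH ?mulr0 // leq_subr.
Qed.

Lemma coef_pow_lt f k n : f 0%N = 0 -> (n < k)%N -> (f ^+ k) n = 0.
Proof.
move=> f0; elim: k n => [//|k IH] n nk.
rewrite exprS fpsM big1 // => -[[|i] /= hi]; first by rewrite f0 mul0r.
by rewrite IH ?mulr0 //; rewrite ltnS in nk hi; lia.
Qed.

(* The last clause is continuity: the coefficients of [d f] up to order n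
   only depend on those of [f] up to order n.+1. *)
Definition is_derivation (d : fps -> fps) :=
  [/\ forall f g, d (f + g) = d f + d g,
      forall f g, d (f * g) = d f * g + f * d g,
      forall c : F, d (fpsC c%:P) = 0 &
      forall n f g, eq_upto n.+1 f g -> eq_upto n (d f) (d g)].

Section Derivation.
Variable d : fps -> fps.
Hypothesis hd : is_derivation d.

Lemma derD f g : d (f + g) = d f + d g. Proof. by case: hd. Qed.
Lemma derM f g : d (f * g) = d f * g + f * d g. Proof. by case: hd. Qed.
Lemma derC (c : F) : d (fpsC c%:P) = 0. Proof. by case: hd. Qed.
Lemma der_eq_upto n f g : eq_upto n.+1 f g -> eq_upto n (d f) (d g).
Proof. by case: hd => _ _ _; apply. Qed.

Lemma der0 : d 0 = 0.
Proof. by apply: (addrI (d 0)); rewrite addr0 -derD addr0. Qed.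
Lemma derN f : d (- f) = - d f.
Proof. by apply: (addrI (d f)); rewrite -derD !subrr der0. Qed.
Lemma derB f g : d (f - g) = d f - d g. Proof. by rewrite derD derN. Qed.
Lemma der1 : d 1 = 0. Proof. by rewrite -(rmorph1 fpsC) -polyC1 derC. Qed.
Lemma derX f k : d (f ^+ k.+1) = f ^+ k * d f *+ k.+1.
Proof.
elim: k => [|k IH]; first by rewrite expr1 expr0 mul1r.
by rewrite exprS derM IH !exprS; ring.
Qed.

Lemma der_eigenM f g p q : d f = fpsC p * f -> d g = fpsC q * g ->
  d (f * g) = fpsC (p + q) * (f * g).
Proof. by move=> df dg; rewrite derM df dg rmorphD; ring. Qed.

End Derivation.

Lemma derivation_sub d e : is_derivation d -> is_derivation e ->
  is_derivation (fun f => d f - e f).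
Proof.
move=> hd he; split=> [f g|f g|c|n f g fg].
- by rewrite (derD hd) (derD he); ring.
- by rewrite (derM hd) (derM he); ring.
- by rewrite (derC hd) (derC he) subr0.
- by move=> i ni; rewrite !fpsB (der_eq_upto hd fg) ?(der_eq_upto he fg).
Qed.

Lemma derivation_mull w d : is_derivation d -> is_derivation (fun f => w * d f).
Proof.
move=> hd; split=> [f g|f g|c|n f g fg].
- by rewrite (derD hd) mulrDr.
- by rewrite (derM hd); ring.
- by rewrite (derC hd) mulr0.
- exact/eq_upto_mul/(der_eq_upto hd).
Qed.

Definition Dz f : fps := fun n => f n.+1 *+ n.+1.
Definition Dt f : fps := fun n => (f n)^`().

Lemma Dz_derivation : is_derivation Dz.
Proof.
split=> [f g|f g|c|n f g fg].
- by apply: fps_ext => n; rewrite /Dz !fpsD mulrnDl.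
- apply: fps_ext => n; rewrite fpsD /Dz (fpsM_trunc _ _ (ltnSn n.+1)).
  rewrite -coef_deriv derivM coefD !(fpsM_trunc _ _ (ltnW (ltnSn n.+1))).
  congr (_ + _); apply: coefM_congr => // i ni;
    by rewrite coef_deriv !coef_poly !ltnS ni (leqW ni).
- by apply: fps_ext => n; rewrite /Dz /fpsC mul0rn.
- by move=> i ni; rewrite /Dz fg.
Qed.

Lemma Dt_derivation : is_derivation Dt.
Proof.
split=> [f g|f g|c|n f g fg].
- by apply: fps_ext => n; rewrite /Dt !fpsD derivD.
- apply: fps_ext => n; rewrite fpsD /Dt !fpsM raddf_sum -big_split /=.
  by apply: eq_bigr => i _; rewrite derivM.
- by apply: fps_ext => n; rewrite /Dt /fpsC; case: ifP; rewrite ?derivC ?deriv0.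
- by move=> i ni; rewrite /Dt fg // ltnW.
Qed.

Lemma Dz_fpsC p : Dz (fpsC p) = 0.
Proof. by apply: fps_ext => n; rewrite /Dz /fpsC mul0rn. Qed.

Lemma Dt_fpsC p : Dt (fpsC p) = fpsC p^`().
Proof. by apply: fps_ext => n; rewrite /Dt /fpsC; case: ifP; rewrite ?deriv0. Qed.

Lemma Dz_fps_z : Dz fps_z = 1.
Proof. by apply: fps_ext => -[|n]; rewrite /Dz /fps_z fps1 /= ?mulr1n ?mul0rn. Qed.

Lemma Dt_fps_z : Dt fps_z = 0.
Proof.
by apply: fps_ext => n; rewrite /Dt /fps_z; case: (n == 1%N); rewrite ?deriv0 // derivC.
Qed.

Lemma gbinom0 (a : F) : gbinom a 0 = 1.
Proof. by rewrite /gbinom big_ord0 fact0 divr1. Qed.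

Lemma gbinomS (a : F) k : gbinom a k.+1 * k.+1%:R = gbinom a k * (a - k%:R).
Proof.
rewrite /gbinom big_ord_recr /= factS natrM.
have : (k.+1%:R : F) != 0 by rewrite pnatr_eq0.
have : (k`!%:R : F) != 0 by rewrite pnatr_eq0 -lt0n fact_gt0.
move: (k.+1%:R : F) (k`!%:R : F) (\prod_(i < k) (a - i%:R)) => x y z hy hx.
by field; rewrite hx hy.
Qed.

Definition binom_trunc (a : F) f N := \sum_(k < N) fpsC (gbinom a k)%:P * f ^+ k.

Lemma fps_powE f k : fps_pow f k = f ^+ k.
Proof. by elim: k => [//|k IH]; rewrite exprS -IH. Qed.

Lemma fps_binom_trunc (a : F) f n N : f 0%N = 0 -> (n < N)%N ->
  fps_binom a f n = binom_trunc a f N n.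
Proof.
move=> f0 nN; rewrite /fps_binom /binom_trunc fps_sum.
under [RHS]eq_bigr do rewrite coef_fpsCM.
rewrite (big_ord_widen N (fun k => (gbinom a k)%:P * fps_pow f k n) nN) big_mkcond /=.
apply: eq_bigr => k _; rewrite fps_powE; case: ltnP => // nk.
by rewrite coef_pow_lt ?mulr0.
Qed.

Lemma fps_binom0 (a : F) f : fps_binom a f 0%N = 1.
Proof. by rewrite /fps_binom big_ord1 gbinom0 polyC1 mul1r. Qed.

Section ChainRule.
Variable d : fps -> fps.
Hypothesis hd : is_derivation d.

(* Telescopes by (k+1) binom(a,k+1) + k binom(a,k) = a binom(a,k), leaving
   only a boundary term of order N. *)
Lemma der_binom_trunc (a : F) f N :
  (1 + f) * d (binom_trunc a f N.+1) =
  fpsC a%:P * binom_trunc a f N.+1 * d f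
  - fpsC (gbinom a N * (a - N%:R))%:P * f ^+ N * d f.
Proof.
elim: N => [|N IH].
  rewrite /binom_trunc big_ord1 gbinom0 expr0 mulr1 polyC1 rmorph1 (der1 hd).
  by rewrite subr0 mulr0 mul1r mulr1 subrr.
have -> : binom_trunc a f N.+2 =
          binom_trunc a f N.+1 + fpsC (gbinom a N.+1)%:P * f ^+ N.+1.
  by rewrite /binom_trunc big_ord_recr.
rewrite (derD hd) (derM hd) (derC hd) mul0r add0r (derX hd) mulrDr IH.
rewrite -(gbinomS a N) !polyCM polyCB !rmorphM rmorphB !polyC_natr !rmorph_nat !exprS.
ring.
Qed.

Lemma der_fps_binom (a : F) f : f 0%N = 0 ->
  (1 + f) * d (fps_binom a f) = fpsC a%:P * fps_binom a f * d f.
Proof.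
move=> f0; apply: fps_ext => n.
have hB : eq_upto n.+1 (fps_binom a f) (binom_trunc a f n.+2).
  by move=> i hi; apply: fps_binom_trunc.
rewrite (@eq_upto_mul n _ (1 + f) _ _ (fun i _ => erefl) (der_eq_upto hd hB)) //.
rewrite der_binom_trunc fpsB.
set K := fpsC _ * f ^+ n.+1.
have -> : (K * d f) n = 0.
  rewrite (@eq_upto_mul n K 0 (d f) (d f)) ?mul0r // => i hi.
  by rewrite /K coef_fpsCM coef_pow_lt ?mulr0.
rewrite subr0; apply: eq_upto_mul => //; apply: eq_upto_mul => // i hi.
by rewrite hB // ltnW.
Qed.

Lemma der_fps_binom_eigen (a : F) p f : f 0%N = 0 ->
  d f = fpsC p * (1 + f) -> d (fps_binom a f) = fpsC (a%:P * p) * fps_binom a f.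
Proof.
move=> f0 df; apply: (@fps_lreg (1 + f)); first by rewrite fpsD f0 addr0.
by rewrite der_fps_binom // df rmorphM; ring.
Qed.

End ChainRule.

Definition gkp_op (r : F) f : fps :=
  fps_lin1 r * Dz f - fpsC ('X * (1 - 'X)) * Dt f.

Lemma gkp_op_derivation r : is_derivation (gkp_op r).
Proof.
by rewrite /gkp_op; apply: derivation_sub; apply: derivation_mull;
  [exact: Dz_derivation | exact: Dt_derivation].
Qed.

Lemma coef_gkp_op r f n : gkp_op r f n =
  f n.+1 *+ n.+1 + (r *+ n)%:P * f n - 'X * (1 - 'X) * (f n)^`().
Proof.
rewrite /gkp_op fps_lin1E mulrDl mul1r fpsB fpsD -mulrA !coef_fpsCM coef_fps_zM.
case: n => [|n]; rewrite /Dz /Dt; first by rewrite mulr0n mulr0 polyC0 mul0r.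
by rewrite polyCMn mulrnAl mulrnAr.
Qed.

Lemma gkp_op_fpsC r p : gkp_op r (fpsC p) = - fpsC ('X * (1 - 'X) * p^`()).
Proof. by rewrite /gkp_op Dz_fpsC Dt_fpsC mulr0 sub0r -rmorphM. Qed.

Lemma gkp_op_fps_z r : gkp_op r fps_z = fps_lin1 r.
Proof. by rewrite /gkp_op Dz_fps_z Dt_fps_z !mulr0 mulr1 subr0. Qed.

Lemma poly_mulrSnI n p q : p *+ n.+1 = q *+ n.+1 -> p = q.
Proof. by rewrite -!scaler_nat => /scalerI; apply; rewrite pnatr_eq0. Qed.

Section Triangle.
Variables r g0 ginf : F.
Local Notation T := (gkp (- r) 1 g0 0 (-1) ginf).
Local Notation G := (gkp_egf (- r) 1 g0 0 (-1) ginf).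

Lemma gkp_eq0 n k : (n < k)%N -> T n k = 0.
Proof. by elim: n k => [|n IH] [|k] //= hk; rewrite !IH ?mulr0 ?addr0 // ltnW. Qed.

Lemma coef_gkp_row n k : (gkp_row (- r) 1 g0 0 (-1) ginf n)`_k = T n k.
Proof.
rewrite /gkp_row -(poly_def _ (fun k => T n k)) coef_poly.
by case: ltnP => // h; rewrite gkp_eq0.
Qed.

Definition gkp_step n p : {poly F} :=
  (g0%:P + ginf *: 'X - (r *+ n)%:P) * p + 'X * (1 - 'X) * p^`().

Lemma gkp_row_rec n :
  gkp_row (- r) 1 g0 0 (-1) ginf n.+1 = gkp_step n (gkp_row (- r) 1 g0 0 (-1) ginf n).
Proof.
apply/polyP => k; rewrite coef_gkp_row /gkp_step.
set P := gkp_row _ _ _ _ _ _ n.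
have -> : 'X * (1 - 'X) * P^`() = 'X * P^`() - 'X * ('X * P^`()) by ring.
rewrite mulrBl mulrDl !coefD !coefN -scalerAl coefZ !coefCM !coefXM.
by case: k => [|[|k]] /=; rewrite ?coef_deriv !coef_gkp_row; ring.
Qed.

Lemma gkp_egf_rec n : G n.+1 *+ n.+1 = gkp_step n (G n).
Proof.
have hn : (n.+1%:R : F) != 0 by rewrite pnatr_eq0.
have stepZ c p : gkp_step n (c *: p) = c *: gkp_step n p.
  by rewrite /gkp_step derivZ -!scalerAr scalerDr.
rewrite /gkp_egf gkp_row_rec stepZ scalerMnl; congr (_ *: _).
by rewrite factS natrM invfM -mulr_natr mulrAC mulVf // mul1r.
Qed.

Lemma gkp_egf_unique f : f 0%N = 1 ->
  gkp_op r f = fpsC (g0%:P + ginf *: 'X) * f -> G = f.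
Proof.
move=> f0 hf; apply: fps_ext; elim=> [|n IH].
  by rewrite f0 /gkp_egf /gkp_row big_ord1 /= fact0 invr1 !scale1r.
apply: (@poly_mulrSnI n); rewrite gkp_egf_rec IH.
have -> : f n.+1 *+ n.+1 =
    gkp_op r f n - (r *+ n)%:P * f n + 'X * (1 - 'X) * (f n)^`().
  by rewrite coef_gkp_op; ring.
by rewrite hf coef_fpsCM /gkp_step; ring.
Qed.

End Triangle.

Lemma gkp_egf_prod (r g0 ginf : F) f g p q :
  f 0%N = 1 -> g 0%N = 1 ->
  gkp_op r f = fpsC p * f -> gkp_op r g = fpsC q * g ->
  p + q = g0%:P + ginf *: 'X ->
  gkp_egf (- r) 1 g0 0 (-1) ginf = fps_mul f g.
Proof.
move=> f0 g0' hf hg pq; change (gkp_egf (- r) 1 g0 0 (-1) ginf = f * g).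
apply: gkp_egf_unique; first by rewrite fpsM0 f0 g0' mulr1.
by rewrite (der_eigenM (gkp_op_derivation r) hf hg) pq.
Qed.

Section Eigenseries.
Variable r : F.
Local Notation Dr := (gkp_op_derivation r).

Lemma gkp_op_pow_lin1 c : r != 0 ->
  gkp_op r (fps_binom (c / r) (fps_sub1 (fps_lin1 r))) =
  fpsC c%:P * fps_binom (c / r) (fps_sub1 (fps_lin1 r)).
Proof.
move=> rn0; have -> : fps_sub1 (fps_lin1 r) = fpsC r%:P * fps_z.
  by rewrite fps_sub1E fps_lin1E addrC addKr.
rewrite (der_fps_binom_eigen Dr _ (p := r%:P)) ?coef_fpsCM ?mulr0 //.
  by rewrite -polyCM mulfVK.
by rewrite (derM Dr) (derC Dr) mul0r add0r gkp_op_fps_z fps_lin1E.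
Qed.

Lemma gkp_op_u : r != 0 -> gkp_op r (fps_u r) = fps_u r.
Proof.
by move=> rn0; rewrite /fps_u -[r^-1]div1r gkp_op_pow_lin1 // polyC1 rmorph1 mul1r.
Qed.

Lemma gkp_op_uinv : r != 0 -> gkp_op r (fps_uinv r) = - fps_uinv r.
Proof.
move=> rn0; rewrite /fps_uinv -[- r^-1]mulN1r gkp_op_pow_lin1 //.
by rewrite polyCN polyC1 rmorphN rmorph1 !mulN1r.
Qed.

Section BinomialFactors.
Variables (a : F) (u : fps).
Hypothesis u0 : u 0%N = 1.

Lemma gkp_op_binom_sub1 : gkp_op r u = u ->
  gkp_op r (fps_binom a (u - 1)) = fpsC a%:P * fps_binom a (u - 1).
Proof.
move=> hu; rewrite (der_fps_binom_eigen Dr _ (p := 1)) ?mulr1 ?fpsB ?u0 ?subrr //.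
by rewrite (derB Dr) (der1 Dr) subr0 hu rmorph1 mul1r addrC subrK.
Qed.

Lemma gkp_op_binom_X : gkp_op r u = u ->
  gkp_op r (fps_binom a (fpsC 'X * (u - 1))) =
  fpsC (a *: 'X) * fps_binom a (fpsC 'X * (u - 1)).
Proof.
move=> hu; rewrite (der_fps_binom_eigen Dr _ (p := 'X)) ?mul_polyC //.
  by rewrite coef_fpsCM fpsB u0 subrr mulr0.
rewrite (derM Dr) (derB Dr) (der1 Dr) subr0 hu gkp_op_fpsC derivX mulr1.
by rewrite !rmorphM !rmorphB !rmorph1; ring.
Qed.

Lemma gkp_op_binom_1mX : gkp_op r u = - u ->
  gkp_op r (fps_binom a (fpsC (1 - 'X) * (u - 1))) =
  fpsC (a *: ('X - 1)) * fps_binom a (fpsC (1 - 'X) * (u - 1)).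
Proof.
move=> hu; rewrite (der_fps_binom_eigen Dr _ (p := 'X - 1)) ?mul_polyC //.
  by rewrite coef_fpsCM fpsB u0 subrr mulr0.
rewrite (derM Dr) (derB Dr) (der1 Dr) subr0 hu gkp_op_fpsC derivB derivX -polyC1 derivC.
by rewrite !rmorphM !rmorphB !rmorph1 rmorph0; ring.
Qed.

End BinomialFactors.
End Eigenseries.

Lemma Dz_fps_exp (c : F) : Dz (fps_exp c) = fpsC c%:P * fps_exp c.
Proof.
apply: fps_ext => n; rewrite coef_fpsCM /Dz /fps_exp -polyCMn -polyCM; congr _%:P.
rewrite -[_ *+ n.+1]mulr_natr exprS factS natrM.
have : (n.+1%:R : F) != 0 by rewrite pnatr_eq0.
have : (n`!%:R : F) != 0 by rewrite pnatr_eq0 -lt0n fact_gt0.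
move: (n.+1%:R : F) (n`!%:R : F) (c ^+ n) => x y z hy hx.
by field; rewrite hx hy.
Qed.

Lemma gkp_op_exp (c : F) : gkp_op 0 (fps_exp c) = fpsC c%:P * fps_exp c.
Proof.
rewrite /gkp_op.
have -> : Dt (fps_exp c) = 0 by apply: fps_ext => n; rewrite /Dt derivC.
by rewrite mulr0 subr0 Dz_fps_exp fps_lin1E polyC0 rmorph0 mul0r addr0 mul1r.
Qed.

Lemma fps_exp0 (c : F) : fps_exp c 0%N = 1.
Proof. by rewrite /fps_exp expr0 fact0 divr1. Qed.

End PowerSeries.

Theorem mainTheorem4 (R : realType) (r0 g0 ginf : R[i]) :
  let G := gkp_egf (- r0) 1 g0 0 (-1) ginf in
  let g1 := - g0 - ginf in
  (r0 != 0 ->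
     (forall n : nat,
        G n = fps_mul (fps_binom g0 (fps_sub1 (fps_u r0)))
                      (fps_binom ginf (fps_pmul 'X (fps_sub1 (fps_u r0)))) n)
  /\ (forall n : nat,
        G n = fps_mul (fps_binom (- g0) (fps_pmul (1 - 'X) (fps_sub1 (fps_uinv r0))))
                      (fps_binom (- g1) (fps_pmul 'X (fps_sub1 (fps_u r0)))) n))
  /\
  (r0 = 0 ->
     forall n : nat,
        G n = fps_mul (fps_exp g0)
                      (fps_binom ginf (fps_pmul 'X (fps_sub1 (fps_exp 1)))) n).
Proof.
move=> G g1; rewrite {}/G {}/g1 !fps_sub1E !fps_pmulE.
have u0 : fps_u r0 0%N = 1 := fps_binom0 _ _.
have v0 : fps_uinv r0 0%N = 1 := fps_binom0 _ _.
split=> [r0n|-> n]; first split=> n.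
- congr (_ n); apply: (gkp_egf_prod (p := g0%:P) (q := ginf *: 'X));
    rewrite ?fps_binom0 //.
  + exact: gkp_op_binom_sub1 u0 (gkp_op_u r0n).
  + exact: gkp_op_binom_X u0 (gkp_op_u r0n).
- congr (_ n); apply: (gkp_egf_prod (p := - g0 *: ('X - 1)) (q := - (- g0 - ginf) *: 'X));
    rewrite ?fps_binom0 //.
  + exact: gkp_op_binom_1mX v0 (gkp_op_uinv r0n).
  + exact: gkp_op_binom_X u0 (gkp_op_u r0n).
  + by rewrite -!mul_polyC !rmorphN rmorphB; ring.
- congr (_ n); apply: (gkp_egf_prod (p := g0%:P) (q := ginf *: 'X));
    rewrite ?fps_binom0 ?fps_exp0 //.
  + exact: gkp_op_exp.
  + apply: gkp_op_binom_X (fps_exp0 1) _.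
    by rewrite gkp_op_exp polyC1 rmorph1 mul1r.
Qed.
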